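(* Let $\varphi(s,v)=\vec c(s)+v\vec q(s)$ be a timelike ruled surface in $\mathbb{R}^3_1$ of type $M^1_-$ or $M^1_+$, and let $\varphi^*(s,v)=\vec c(s)+R(s)\vec a(s)+v\vec q^*(s)$ be a Mannheim offset of $\varphi$. Then $\varphi$ is developable if and only if $R$ is constant.
   Context: Work in Minkowski 3-space $\mathbb{R}^3_1$, i.e. $\mathbb{R}^3$ with $\langle x,y\rangle=-x_1y_1+x_2y_2+x_3y_3$, norm $\|x\|=\sqrt{|\langle x,x\rangle|}$, and Lorentzian cross product $x\times y=(x_2y_3-x_3y_2,\,x_1y_3-x_3y_1,\,x_2y_1-x_1y_2)$. A ruled surface is $\varphi(s,v)=\vec c(s)+v\vec q(s)$, where $\vec q$ is a unit non-null vector field with $\langle\vec q,\vec q\rangle=\varepsilon_2\in\{\pm1\}$, $d\vec q/ds$ is non-null, and the base curve $\vec c$ is the striction curve, i.e. $\langle d\vec q/ds,d\vec c/ds\rangle=0$; $s$ is the arc-length parameter of $\vec c$. Its Frenet frame is $\{\vec q,\vec h,\vec a\}$ with central normal $\vec h=\frac{d\vec q/ds}{\|d\vec q/ds\|}$ and asymptotic normal $\vec a=\frac{(d\vec q/ds)\times\vec q}{\|d\vec q/ds\|}$ (all assumed non-null). The surface is of type $M^1_-$ if $\vec q$ is timelike and $\vec h$ spacelike; of type $M^1_+$ if $\vec q$ and $\vec h$ are both spacelike (these two types are timelike surfaces); of type $M^2_+$ if $\vec h$ is timelike and $\vec q$, $d\vec q/ds$ are spacelike (a spacelike surface). The distribution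 parameter is $d_\varphi=\det(d\vec c/ds,\vec q,d\vec q/ds)/\langle d\vec q/ds,d\vec q/ds\rangle$, and $\varphi$ is called developable iff $d_\varphi\equiv 0$. A ruled surface $\varphi^*(s,v)=\vec c^*(s)+v\vec q^*(s)$, with striction curve $\vec c^*$ and Frenet frame $\{\vec q^*,\vec h^*,\vec a^*\}$ defined in the same way, is a Mannheim offset of the timelike ruled surface $\varphi$ if there is a one-to-one correspondence between their rulings such that $\vec h^*=\vec a$ (the asymptotic normal of $\varphi$ is the central normal of $\varphi^*$); in this case $\vec c^*(s)=\vec c(s)+R(s)\vec a(s)$ for a scalar function $R$. *)

From Stdlib Require Import Reals.
From Coquelicot Require Import Coquelicot.
Open Scope R_scope.

Definition vec3 := (R * R * R)%type.
Definition v1 (x : vec3) : R := fst (fst x).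
Definition v2 (x : vec3) : R := snd (fst x).
Definition v3 (x : vec3) : R := snd x.
Definition mk3 (a b c : R) : vec3 := (a, b, c).

Definition vadd (x y : vec3) : vec3 := mk3 (v1 x + v1 y) (v2 x + v2 y) (v3 x + v3 y).
Definition vscale (k : R) (x : vec3) : vec3 := mk3 (k * v1 x) (k * v2 x) (k * v3 x).

Definition lip (x y : vec3) : R := - v1 x * v1 y + v2 x * v2 y + v3 x * v3 y.
Definition lnorm (x : vec3) : R := sqrt (Rabs (lip x x)).
Definition lcross (x y : vec3) : vec3 :=
  mk3 (v2 x * v3 y - v3 x * v2 y) (v1 x * v3 y - v3 x * v1 y) (v2 x * v1 y - v1 x * v2 y).
Definition det3 (x y z : vec3) : R :=
  v1 x * (v2 y * v3 z - v3 y * v2 z)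
  - v2 x * (v1 y * v3 z - v3 y * v1 z)
  + v3 x * (v1 y * v2 z - v2 y * v1 z).

Definition timelike (x : vec3) : Prop := lip x x < 0.
Definition spacelike (x : vec3) : Prop := 0 < lip x x.
Definition nonnull (x : vec3) : Prop := lip x x <> 0.

Definition dcurve (f : R -> vec3) (s : R) : vec3 :=
  mk3 (Derive (fun t => v1 (f t)) s) (Derive (fun t => v2 (f t)) s)
      (Derive (fun t => v3 (f t)) s).

Definition smooth_fun_on (I : R -> Prop) (g : R -> R) : Prop :=
  forall s, I s -> forall n, ex_derive_n g n s.
Definition smooth_curve_on (I : R -> Prop) (f : R -> vec3) : Prop :=
  smooth_fun_on I (fun t => v1 (f t)) /\ smooth_fun_on I (fun t => v2 (f t))
  /\ smooth_fun_on I (fun t => v3 (f t)).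

(** Frenet frame {q, h, a} of the ruled surface c(s) + v q(s). *)
Definition central_normal (q : R -> vec3) (s : R) : vec3 :=
  vscale (/ lnorm (dcurve q s)) (dcurve q s).
Definition asymptotic_normal (q : R -> vec3) (s : R) : vec3 :=
  vscale (/ lnorm (dcurve q s)) (lcross (dcurve q s) (q s)).

Definition ruled_surface_on (I : R -> Prop) (c q : R -> vec3) : Prop :=
  smooth_curve_on I c /\ smooth_curve_on I q /\
  forall s, I s ->
    (lip (q s) (q s) = 1 \/ lip (q s) (q s) = -1) /\
    nonnull (dcurve q s) /\
    lip (dcurve q s) (dcurve c s) = 0 /\
    nonnull (central_normal q s) /\
    nonnull (asymptotic_normal q s).

Definition arclength_on (I : R -> Prop) (c : R -> vec3) : Prop :=
  forall s, I s -> lnorm (dcurve c s) = 1.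

Definition type_M1_minus (I : R -> Prop) (q : R -> vec3) : Prop :=
  forall s, I s -> timelike (q s) /\ spacelike (central_normal q s).
Definition type_M1_plus (I : R -> Prop) (q : R -> vec3) : Prop :=
  forall s, I s -> spacelike (q s) /\ spacelike (central_normal q s).

Definition distribution_parameter (c q : R -> vec3) (s : R) : R :=
  det3 (dcurve c s) (q s) (dcurve q s) / lip (dcurve q s) (dcurve q s).
Definition developable_on (I : R -> Prop) (c q : R -> vec3) : Prop :=
  forall s, I s -> distribution_parameter c q s = 0.

(** phi*(s,v) = c(s) + R(s) a(s) + v qs(s) is a Mannheim offset of phi:
    it is a ruled surface with striction curve c* = c + R a, and h* = a. *)
Definition mannheim_offset_on (I : R -> Prop) (c q : R -> vec3) (Rf : R -> R)
    (qs : R -> vec3) : Prop :=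
  ruled_surface_on I (fun s => vadd (c s) (vscale (Rf s) (asymptotic_normal q s))) qs /\
  forall s, I s -> central_normal qs s = asymptotic_normal q s.

(* Let [a = (q' x q) / |q'|] be the asymptotic normal of [phi].  The Mannheim
   condition [h* = a] makes [a] orthogonal to the tangent [c' + R' a + R a'] of
   the striction curve of [phi*].  Since [<a,a> = +-1], also [<a,a'> = 0], so
   [R' <a,a> = - <a,c'> = - det(c',q,q') / |q'|].  Hence the distribution
   parameter [det(c',q,q') / <q',q'>] vanishes exactly where [R'] does, and on
   an interval [R' = 0] means [R] is constant. *)

From Stdlib Require Import Reals Lra.
From Coquelicot Require Import Coquelicot.
Open Scope R_scope.

Lemma lip_sym x y : lip x y = lip y x.
Proof. unfold lip; ring. Qed.

Lemma lip_scale_l k x y : lip (vscale k x) y = k * lip x y.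
Proof. unfold lip, vscale, mk3, v1, v2, v3; simpl; ring. Qed.

Lemma lip_vadd_r x y z : lip x (vadd y z) = lip x y + lip x z.
Proof. unfold lip, vadd, mk3, v1, v2, v3; simpl; ring. Qed.

Lemma lip_lcross_lcross p x :
  lip (lcross p x) (lcross p x) = lip p x * lip p x - lip p p * lip x x.
Proof. unfold lip, lcross, mk3, v1, v2, v3; simpl; ring. Qed.

Lemma lip_lcross_l p x y : lip (lcross p x) y = det3 y x p.
Proof. unfold lip, det3, lcross, mk3, v1, v2, v3; simpl; ring. Qed.

Lemma lnorm_sqr x : lnorm x * lnorm x = Rabs (lip x x).
Proof. apply sqrt_sqrt, Rabs_pos. Qed.

Lemma lnorm_gt0 x : nonnull x -> 0 < lnorm x.
Proof. intros Hx; apply sqrt_lt_R0, Rabs_pos_lt, Hx. Qed.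

(* [<a,a> = - <x,x> sgn <p,p>] for the normalized cross product [a]. *)
Lemma lip_normalized_lcross_sqr p x :
  lip x p = 0 -> lip x x ^ 2 = 1 -> nonnull p ->
  let a := vscale (/ lnorm p) (lcross p x) in lip a a ^ 2 = 1.
Proof.
  intros Hxp Hx Hp a; unfold a.
  rewrite lip_scale_l, lip_sym, lip_scale_l, lip_lcross_lcross, (lip_sym p x), Hxp.
  pose proof (lnorm_sqr p) as HN; pose proof (lnorm_gt0 p Hp) as HNpos.
  assert (HL : Rabs (lip p p) ^ 2 = lip p p ^ 2) by apply pow2_abs.
  assert (HA : Rabs (lip p p) <> 0) by (apply Rabs_no_R0; exact Hp).
  replace (/ lnorm p * (/ lnorm p * (0 * 0 - lip p p * lip x x)))
    with (- (lip p p * lip x x) / Rabs (lip p p)) by (rewrite <- HN; field; lra).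
  replace ((- (lip p p * lip x x) / Rabs (lip p p)) ^ 2)
    with (lip p p ^ 2 * lip x x ^ 2 / Rabs (lip p p) ^ 2) by (field; exact HA).
  rewrite Hx, <- HL; field; exact HA.
Qed.

Lemma lip_asymptotic_normal_l q s y :
  lip (asymptotic_normal q s) y = / lnorm (dcurve q s) * det3 y (q s) (dcurve q s).
Proof. unfold asymptotic_normal; rewrite lip_scale_l, lip_lcross_l; reflexivity. Qed.

Lemma locally_open_interval s0 s1 s :
  s0 < s < s1 -> locally s (fun t => s0 < t < s1).
Proof.
  intros Hs; apply (locally_open (fun t => s0 < t /\ t < s1)); auto.
  apply open_and; [apply open_gt | apply open_lt].
Qed.

Definition ex_dcurve (f : R -> vec3) (x : R) : Prop :=
  ex_derive (fun t => v1 (f t)) x /\ ex_derive (fun t => v2 (f t)) x /\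
  ex_derive (fun t => v3 (f t)) x.

Lemma smooth_curve_ex_dcurve I f s :
  smooth_curve_on I f -> I s -> ex_dcurve f s /\ ex_dcurve (dcurve f) s.
Proof.
  intros [H1 [H2 H3]] Hs.
  exact (conj (conj (H1 s Hs 1%nat) (conj (H2 s Hs 1%nat) (H3 s Hs 1%nat)))
              (conj (H1 s Hs 2%nat) (conj (H2 s Hs 2%nat) (H3 s Hs 2%nat)))).
Qed.

Lemma is_derive_lorentz_form (f1 f2 f3 g1 g2 g3 : R -> R) x :
  ex_derive f1 x -> ex_derive f2 x -> ex_derive f3 x ->
  ex_derive g1 x -> ex_derive g2 x -> ex_derive g3 x ->
  is_derive (fun t => - f1 t * g1 t + f2 t * g2 t + f3 t * g3 t) x
    (- Derive f1 x * g1 x + Derive f2 x * g2 x + Derive f3 x * g3 x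
     + (- f1 x * Derive g1 x + f2 x * Derive g2 x + f3 x * Derive g3 x)).
Proof. intros; auto_derive; [repeat split; assumption | unfold Derive; cbv beta; ring]. Qed.

Lemma is_derive_lip u w x :
  ex_dcurve u x -> ex_dcurve w x ->
  is_derive (fun t => lip (u t) (w t)) x
            (lip (dcurve u x) (w x) + lip (u x) (dcurve w x)).
Proof.
  intros [U1 [U2 U3]] [W1 [W2 W3]].
  exact (is_derive_lorentz_form _ _ _ _ _ _ x U1 U2 U3 W1 W2 W3).
Qed.

Lemma ex_derive_det2 (f g h k : R -> R) x :
  ex_derive f x -> ex_derive g x -> ex_derive h x -> ex_derive k x ->
  ex_derive (fun t => f t * g t - h t * k t) x.
Proof. intros; auto_derive; repeat split; assumption. Qed.

Lemma ex_dcurve_lcross u w x :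
  ex_dcurve u x -> ex_dcurve w x -> ex_dcurve (fun t => lcross (u t) (w t)) x.
Proof.
  intros [U1 [U2 U3]] [W1 [W2 W3]]; split; [|split].
  - exact (ex_derive_det2 _ _ _ _ x U2 W3 U3 W2).
  - exact (ex_derive_det2 _ _ _ _ x U1 W3 U3 W1).
  - exact (ex_derive_det2 _ _ _ _ x U2 W1 U1 W2).
Qed.

Lemma ex_dcurve_vscale (k : R -> R) u x :
  ex_derive k x -> ex_dcurve u x -> ex_dcurve (fun t => vscale (k t) (u t)) x.
Proof.
  intros Hk [U1 [U2 U3]]; repeat split; apply ex_derive_mult; assumption.
Qed.

Lemma ex_derive_inv_lnorm u x :
  ex_dcurve u x -> nonnull (u x) -> ex_derive (fun t => / lnorm (u t)) x.
Proof.
  intros Hu Hn; apply ex_derive_inv; [|exact (Rgt_not_eq _ _ (lnorm_gt0 _ Hn))].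
  eexists; apply is_derive_sqrt.
  - exact (is_derive_Rabs _ _ _ (is_derive_lip u u x Hu Hu) Hn).
  - exact (Rabs_pos_lt _ Hn).
Qed.

Lemma ex_dcurve_asymptotic_normal q x :
  ex_dcurve q x -> ex_dcurve (dcurve q) x -> nonnull (dcurve q x) ->
  ex_dcurve (asymptotic_normal q) x.
Proof.
  intros Hq Hdq Hn.
  exact (ex_dcurve_vscale _ _ x (ex_derive_inv_lnorm _ x Hdq Hn)
           (ex_dcurve_lcross _ _ x Hdq Hq)).
Qed.

Lemma dcurve_vadd_vscale c (k : R -> R) a x :
  ex_dcurve c x -> ex_derive k x -> ex_dcurve a x ->
  dcurve (fun t => vadd (c t) (vscale (k t) (a t))) x =
  vadd (dcurve c x) (vadd (vscale (Derive k x) (a x)) (vscale (k x) (dcurve a x))).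
Proof.
  intros [C1 [C2 C3]] Hk [A1 [A2 A3]].
  unfold dcurve, vadd, vscale, mk3, v1, v2, v3 in *; simpl in *.
  rewrite !Derive_plus, !Derive_mult; auto; apply ex_derive_mult; assumption.
Qed.

(* [<u,u>^2 = 1] states [<u,u> = +-1] in a form that is locally constant without
   any continuity argument. *)
Lemma lip_dcurve_eq0 u x :
  ex_dcurve u x -> locally x (fun t => lip (u t) (u t) ^ 2 = 1) ->
  lip (u x) (dcurve u x) = 0.
Proof.
  intros Hu Hl.
  pose proof (is_derive_pow _ 2 _ _ (is_derive_lip u u x Hu Hu)) as Hd.
  assert (H0 : is_derive (fun t => lip (u t) (u t) ^ 2) x 0).
  { apply is_derive_ext_loc with (fun _ => 1).
    - apply filter_imp with (2 := Hl); intros t Ht; now rewrite Ht.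
    - apply (is_derive_const (V := R_NormedModule)). }
  pose proof (locally_singleton _ _ Hl : lip (u x) (u x) ^ 2 = 1) as Hux.
  pose proof (eq_trans (eq_sym (is_derive_unique _ _ _ Hd)) (is_derive_unique _ _ _ H0)) as E.
  rewrite (lip_sym (dcurve u x)) in E; simpl in E, Hux; nra.
Qed.

Lemma Derive_eq0_iff_constant s0 s1 (f : R -> R) :
  (forall s, s0 < s < s1 -> ex_derive f s) ->
  (forall s, s0 < s < s1 -> Derive f s = 0) <->
  exists k, forall s, s0 < s < s1 -> f s = k.
Proof.
  intros Hf; split.
  - intros H0; exists (f ((s0 + s1) / 2)); intros s Hs.
    assert (Hd : forall t, s0 < t < s1 -> is_derive f t 0).
    { intros t Ht; rewrite <- (H0 t Ht); exact (Derive_correct _ _ (Hf t Ht)). }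
    destruct (Rtotal_order s ((s0 + s1) / 2)) as [Hlt | [-> | Hgt]]; auto.
    + apply eq_is_derive; auto; intros t Ht; apply Hd; lra.
    + symmetry; apply eq_is_derive; auto; intros t Ht; apply Hd; lra.
  - intros [k Hk] s Hs.
    rewrite (Derive_ext_loc f (fun _ => k)); [apply Derive_const|].
    apply filter_imp with (2 := locally_open_interval s0 s1 s Hs); auto.
Qed.

Section MannheimOffset.

Variables (s0 s1 : R) (c q qs : R -> vec3) (Rf : R -> R).
Let I := fun s => s0 < s < s1.
Let a := asymptotic_normal q.

Hypothesis Hruled : ruled_surface_on I c q.
Hypothesis HRf : smooth_fun_on I Rf.
Hypothesis Hoffset : mannheim_offset_on I c q Rf qs.

Lemma lip_asymptotic_normal_sqr s : I s -> lip (a s) (a s) ^ 2 = 1.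
Proof.
  intros Hs; destruct Hruled as [_ [Hq Hp]].
  destruct (Hp s Hs) as [Hunit [Hdq _]].
  assert (Hunit2 : lip (q s) (q s) ^ 2 = 1) by (destruct Hunit as [-> | ->]; ring).
  apply lip_normalized_lcross_sqr; auto.
  apply lip_dcurve_eq0; [exact (proj1 (smooth_curve_ex_dcurve _ _ _ Hq Hs))|].
  apply filter_imp with (2 := locally_open_interval s0 s1 s Hs); intros t Ht.
  destruct (proj1 (Hp t Ht)) as [-> | ->]; ring.
Qed.

Lemma offset_striction_identity s : I s ->
  lip (a s) (dcurve c s) + Derive Rf s * lip (a s) (a s) = 0.
Proof.
  intros Hs; destruct Hruled as [Hc [Hq Hp]]; destruct Hoffset as [[_ [_ Hps]] Hh].
  destruct (smooth_curve_ex_dcurve _ _ _ Hq Hs) as [Hq1 Hq2].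
  pose proof (proj1 (smooth_curve_ex_dcurve _ _ _ Hc Hs)) as Hc1.
  pose proof (ex_dcurve_asymptotic_normal q s Hq1 Hq2 (proj1 (proj2 (Hp s Hs)))) as Ha1.
  assert (Haa' : lip (a s) (dcurve a s) = 0).
  { apply lip_dcurve_eq0; auto.
    apply filter_imp with (2 := locally_open_interval s0 s1 s Hs).
    exact lip_asymptotic_normal_sqr. }
  pose proof (proj1 (proj2 (proj2 (Hps s Hs)))) as Hstriction.
  assert (Horth : lip (a s) (dcurve (fun t => vadd (c t) (vscale (Rf t) (a t))) s) = 0).
  { unfold a; rewrite <- (Hh s Hs); unfold central_normal.
    rewrite lip_scale_l, Hstriction; ring. }
  rewrite (dcurve_vadd_vscale c Rf a s Hc1 (HRf s Hs 1%nat) Ha1) in Horth.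
  rewrite !lip_vadd_r, !(lip_sym (a s) (vscale _ _)), !lip_scale_l in Horth.
  rewrite (lip_sym (dcurve a s)), Haa' in Horth; lra.
Qed.

Lemma distribution_parameter_eq0_iff s : I s ->
  distribution_parameter c q s = 0 <-> Derive Rf s = 0.
Proof.
  intros Hs; destruct Hruled as [_ [_ Hp]].
  destruct (Hp s Hs) as [_ [Hdq [_ [_ Ha]]]].
  pose proof (offset_striction_identity s Hs) as E.
  unfold a in E; rewrite (lip_asymptotic_normal_l q s (dcurve c s)) in E; fold a in E.
  pose proof (lnorm_gt0 _ Hdq) as HN; fold a in Ha.
  unfold distribution_parameter, nonnull in *.
  set (D := det3 (dcurve c s) (q s) (dcurve q s)) in *.
  split; intros H0.
  - assert (HD : D = 0).
    { apply (Rmult_eq_reg_r (/ lip (dcurve q s) (dcurve q s))); auto with real.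
      rewrite Rmult_0_l; exact H0. }
    rewrite HD, Rmult_0_r, Rplus_0_l in E.
    destruct (Rmult_integral _ _ E); tauto.
  - rewrite H0, Rmult_0_l, Rplus_0_r in E.
    destruct (Rmult_integral _ _ E) as [H | ->].
    + exfalso; apply (Rinv_neq_0_compat (lnorm (dcurve q s))); lra.
    + unfold Rdiv; ring.
Qed.

End MannheimOffset.

Theorem theorem4p1 (s0 s1 : R) (c q qs : R -> vec3) (Rf : R -> R) :
  s0 < s1 ->
  ruled_surface_on (fun s => s0 < s < s1) c q ->
  arclength_on (fun s => s0 < s < s1) c ->
  (type_M1_minus (fun s => s0 < s < s1) q \/ type_M1_plus (fun s => s0 < s < s1) q) ->
  smooth_fun_on (fun s => s0 < s < s1) Rf ->
  mannheim_offset_on (fun s => s0 < s < s1) c q Rf qs ->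
  (developable_on (fun s => s0 < s < s1) c q <->
   exists k : R, forall s, s0 < s < s1 -> Rf s = k).
Proof.
  intros _ Hruled _ _ HRf Hoffset.
  rewrite <- (Derive_eq0_iff_constant s0 s1 Rf (fun s Hs => HRf s Hs 1%nat)).
  split; intros H s Hs;
    apply (distribution_parameter_eq0_iff s0 s1 c q qs Rf Hruled HRf Hoffset s Hs);
    exact (H s Hs).
Qed.
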